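(* For every $m\ge 0$, the following identity holds in $A_{M,M^\perp}$: \[ \delta^m=\sum_{(\mathcal F|\mathcal G,\mathbf e)\in\mathcal T^m}x_{\mathcal F|\mathcal G}, \] where $\mathcal T^m$ is the set of pairs $(\mathcal F|\mathcal G,\mathbf e)$ such that $\mathcal F|\mathcal G$ is a biflag of length $m$, with biflats indexed $F_1|G_1,\dots,F_m|G_m$ so that $F_1\subseteq\cdots\subseteq F_m$ and $G_1\supseteq\cdots\supseteq G_m$, and $\mathbf e=(e_1,\dots,e_m)$ is a sequence of distinct elements of $E$ with, for every $1\le i\le m$, \[ e_i\in F_i\cap G_i\quad\text{and}\quad e_i=\max\Big(E-\bigcup_{j:\,e_j>e_i}(F_j\cap G_j)\Big). \]
   Context: Let $M$ be a matroid with no loops and no coloops on the ground set $E=\{0,1,\dots,n\}$, totally ordered by the usual order of integers; $M^\perp$ its dual. A biflat of $M$ is a pair $F|G$ where $F$ is a flat of $M$, $G$ is a flat of $M^\perp$, both are nonempty, they are not both equal to $E$, and $F\cup G=E$. Two biflats $F|G$, $F'|G'$ are compatible if ($F\subseteq F'$ and $G\supseteq G'$) or ($F\supseteq F'$ and $G\subseteq G'$). A biflag is a set of pairwise compatible biflats with $\bigcup_{F|G}(F\cap G)\neq E$; its length is its number of biflats. Conormal Chow ring: $S$ is the polynomial ring over $\mathbb R$ in variables $x_{F|G}$, one per biflat; $x_{\mathcal F|\mathcal G}=\prod_{F|G\in\mathcal F|\mathcal G}x_{F|G}$ for a set of biflats. For $i\in E$, $\gamma_i=\sum_{i\in F,\,F\neq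 E}x_{F|G}$, $\bar\gamma_i=\sum_{i\in G,\,G\neq E}x_{F|G}$, $\delta_i=\sum_{i\in F\cap G}x_{F|G}$. $I$ is generated by the $x_{\mathcal F|\mathcal G}$ for sets of biflats that are not biflags, $J$ by all $\gamma_i-\gamma_j$, $\bar\gamma_i-\bar\gamma_j$; $A_{M,M^\perp}=S/(I+J)$, and $\delta$ denotes the common class of all $\delta_i$. *)

From Stdlib Require Import Rdefinitions.
From HB Require Import structures.
From mathcomp Require Import all_boot all_order all_algebra.
From mathcomp Require Import Rstruct.
From mathcomp Require Import mpoly.

Set Implicit Arguments.
Unset Strict Implicit.
Unset Printing Implicit Defensive.

Import Order.TTheory GRing.Theory.
Local Open Scope ring_scope.

(* Ground set E = {0,...,n}, modelled as 'I_n.+1 with the usual order. *)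
Notation gset n := ('I_n.+1).

Definition basis_exchange (T : finType) (Bs : {set {set T}}) : Prop :=
  forall B1 B2, B1 \in Bs -> B2 \in Bs -> forall x, x \in B1 :\: B2 ->
    exists2 y, y \in B2 :\: B1 & (y |: (B1 :\ x)) \in Bs.

Record matroid (n : nat) := Matroid {
  bases : {set {set gset n}};
  bases_nonempty : bases != set0;
  bases_exchange : basis_exchange bases }.

Definition rk (T : finType) (Bs : {set {set T}}) (A : {set T}) : nat :=
  \max_(b in Bs) #|A :&: b|.

Definition is_flat (T : finType) (Bs : {set {set T}}) (F : {set T}) : bool :=
  [forall x, (x \notin F) ==> (rk Bs F < rk Bs (x |: F))%N].

Definition dual_bases (T : finType) (Bs : {set {set T}}) : {set {set T}} :=
  [set ~: b | b in Bs].

Definition flat n (M : matroid n) (F : {set gset n}) : bool :=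
  is_flat (bases M) F.
Definition dual_flat n (M : matroid n) (G : {set gset n}) : bool :=
  is_flat (dual_bases (bases M)) G.

Definition no_loops n (M : matroid n) : Prop :=
  forall x : gset n, exists2 b, b \in bases M & x \in b.
Definition no_coloops n (M : matroid n) : Prop :=
  forall x : gset n, exists2 b, b \in bases M & x \notin b.

Definition is_biflat n (M : matroid n) (p : {set gset n} * {set gset n}) : bool :=
  [&& flat M p.1, dual_flat M p.2, p.1 != set0, p.2 != set0,
      ~~ ((p.1 == setT) && (p.2 == setT)) & p.1 :|: p.2 == setT].

Definition biflat n (M : matroid n) : finType :=
  {p : {set gset n} * {set gset n} | is_biflat M p}.

Definition bF n (M : matroid n) (b : biflat M) : {set gset n} := (val b).1.
Definition bG n (M : matroid n) (b : biflat M) : {set gset n} := (val b).2.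

Definition compatible n (M : matroid n) (b b' : biflat M) : bool :=
  ((bF b \subset bF b') && (bG b' \subset bG b)) ||
  ((bF b' \subset bF b) && (bG b \subset bG b')).

Definition is_biflag n (M : matroid n) (S : {set biflat M}) : bool :=
  [forall b in S, forall b' in S, compatible b b'] &&
  (\bigcup_(b in S) (bF b :&: bG b) != setT).

Definition Spoly n (M : matroid n) := {mpoly R[#|biflat M|]}.

Definition xv n (M : matroid n) (b : biflat M) : Spoly M := 'X_(enum_rank b).

Definition xset n (M : matroid n) (S : {set biflat M}) : Spoly M :=
  \prod_(b in S) xv b.

Definition gamma n (M : matroid n) (i : gset n) : Spoly M :=
  \sum_(b | (i \in bF b) && (bF b != setT)) xv b.
Definition gammabar n (M : matroid n) (i : gset n) : Spoly M :=
  \sum_(b | (i \in bG b) && (bG b != setT)) xv b.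
Definition delta n (M : matroid n) (i : gset n) : Spoly M :=
  \sum_(b | i \in bF b :&: bG b) xv b.

Definition IJ_gen n (M : matroid n) (q : Spoly M) : Prop :=
  (exists S : {set biflat M}, ~~ is_biflag S /\ q = xset S) \/
  (exists i j, q = gamma M i - gamma M j) \/
  (exists i j, q = gammabar M i - gammabar M j).

Definition in_ideal (A : comRingType) (gen : A -> Prop) (p : A) : Prop :=
  exists s : seq (A * A), (forall q, q \in s -> gen q.2) /\
    p = \sum_(q <- s) q.1 * q.2.

Definition eq_in_A n (M : matroid n) (p q : Spoly M) : Prop :=
  in_ideal (@IJ_gen n M) (p - q).

Definition in_Tm n (M : matroid n) (m : nat)
    (fe : {ffun 'I_m -> biflat M} * {ffun 'I_m -> gset n}) : bool :=
  let f := fe.1 in let e := fe.2 in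
  [&& injectiveb f,
      [forall i : 'I_m, forall j : 'I_m, (i <= j)%N ==>
          ((bF (f i) \subset bF (f j)) && (bG (f j) \subset bG (f i)))],
      is_biflag [set f i | i : 'I_m],
      injectiveb e &
      [forall i : 'I_m,
        let D := ~: \bigcup_(j : 'I_m | (e i < e j)%N) (bF (f j) :&: bG (f j)) in
        [&& e i \in bF (f i) :&: bG (f i), e i \in D &
            [forall x in D, (x <= e i)%N]]]].

(* The classes delta_i all agree modulo J, because delta_i equals
   gamma_i + gammabar_i minus the sum of all x_{F|G} with F, G proper.  Hence,
   modulo I + J, delta^(m+1) = delta^m * delta_{e*} for any choice of e*, and
   we choose it depending on the monomial: by induction
   delta^m = sum_{(f,e) in T^m} x_f, and for each (f,e) we multiply by
   delta_{e*(f)} where e*(f) is the largest element of E not covered by any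
   F_j :&: G_j.  Expanding delta_{e*} = sum_{e* in F :&: G} x_{F|G}, the
   terms for which f together with F|G is not a biflag lie in I, and the
   remaining terms are in bijection with T^(m+1): insert F|G into the flag at
   its position in the chain, with label e*; conversely remove the biflat
   whose label is smallest.  The argument does not use that M has no loops
   or coloops. *)

From Stdlib Require Import Rdefinitions.
From HB Require Import structures.
From mathcomp Require Import all_boot all_order all_algebra.
From mathcomp Require Import Rstruct.
From mathcomp Require Import mpoly.
From mathcomp Require Import zify ring.

Set Implicit Arguments.
Unset Strict Implicit.
Unset Printing Implicit Defensive.

Import Order.TTheory GRing.Theory.
Local Open Scope ring_scope.

Section Ideal.
Variables (A : comNzRingType) (gen : A -> Prop).
Local Notation ideal := (in_ideal gen).

Lemma ideal0 : ideal 0.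
Proof. by exists [::]; split => //; rewrite big_nil. Qed.

Lemma idealD p q : ideal p -> ideal q -> ideal (p + q).
Proof.
move=> [s [hs ->]] [t [ht ->]]; exists (s ++ t); split; last by rewrite big_cat.
by move=> x; rewrite mem_cat => /orP[/hs|/ht].
Qed.

Lemma idealMl r p : ideal p -> ideal (r * p).
Proof.
move=> [s [hs ->]]; exists [seq (r * q.1, q.2) | q <- s]; split.
  by move=> x /mapP[y ys ->] /=; apply: hs.
by rewrite big_map mulr_sumr; apply: eq_bigr => q _; rewrite mulrA.
Qed.

Lemma idealMr r p : ideal p -> ideal (p * r).
Proof. by rewrite mulrC; apply: idealMl. Qed.

Lemma ideal_gen q : gen q -> ideal q.
Proof.
move=> hq; exists [:: (1, q)]; split; last by rewrite big_seq1 mul1r.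
by move=> x; rewrite inE => /eqP ->.
Qed.

Lemma ideal_sum (I : finType) (P : pred I) (F : I -> A) :
  (forall i, P i -> ideal (F i)) -> ideal (\sum_(i | P i) F i).
Proof. by move=> hF; apply: (big_ind ideal) => //; [exact: ideal0|exact: idealD]. Qed.

End Ideal.

Lemma sum_ord_lt m k : (\sum_(j < m) ((j : nat) < k : nat))%N = minn m k.
Proof.
elim: m => [|m IH]; first by rewrite big_ord0 min0n.
by rewrite big_ord_recr /= IH; case: (ltnP m k) => h; lia.
Qed.

Lemma sum_ord_pred_le m (Q : pred 'I_m) : (\sum_(i < m) (Q i : nat) <= m)%N.
Proof.
rewrite -[leqRHS]minnn -sum_ord_lt; apply: leq_sum => i _.
by rewrite ltn_ord; case: (Q i).
Qed.

Lemma downward_closed_segment m (Q : pred 'I_m) :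
  (forall j j' : 'I_m, (j' <= j)%N -> Q j -> Q j') ->
  forall j, Q j = (j < \sum_(i < m) (Q i : nat))%N.
Proof.
move=> Qdown j; have := ltn_ord j; case Qj: (Q j).
  have : (\sum_(i < m) ((i : nat) < j.+1 : nat) <= \sum_(i < m) (Q i : nat))%N.
    apply: leq_sum => i _; case: (ltnP i j.+1) => //= lt_ij.
    by rewrite (Qdown j i _ Qj).
  by rewrite sum_ord_lt; lia.
have : (\sum_(i < m) (Q i : nat) <= \sum_(i < m) ((i : nat) < j : nat))%N.
  apply: leq_sum => i _; case Qi: (Q i) => //=; case: (ltnP i j) => // le_ji.
  by rewrite (Qdown i j le_ji Qi) in Qj.
by rewrite sum_ord_lt; lia.
Qed.

Lemma leq_lift2 m (k : 'I_m.+1) (j j' : 'I_m) :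
  (lift k j <= lift k j')%N = (j <= j')%N.
Proof. exact: leq_bump2. Qed.

Lemma lift_ltE m (k : 'I_m.+1) (j : 'I_m) : (lift k j < k)%N = (j < k)%N.
Proof. by rewrite /= /bump; case: leqP; lia. Qed.

Lemma big_ord_lift (R : Type) (idx : R) (op : Monoid.com_law idx) m
    (k : 'I_m.+1) (P : pred 'I_m.+1) (F : 'I_m.+1 -> R) :
  \big[op/idx]_(i | P i) F i =
  op (if P k then F k else idx) (\big[op/idx]_(j < m | P (lift k j)) F (lift k j)).
Proof. by rewrite big_mkcond (bigD1_ord k) //= [in RHS]big_mkcond. Qed.

Definition ins_fun (T : Type) m (k : 'I_m.+1) (f : 'I_m -> T) (x : T) :
    {ffun 'I_m.+1 -> T} :=
  [ffun i => if unlift k i is Some j then f j else x].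

Lemma ins_fun_lift (T : Type) m k (f : 'I_m -> T) x j : ins_fun k f x (lift k j) = f j.
Proof. by rewrite ffunE liftK. Qed.

Lemma ins_fun_at (T : Type) m k (f : 'I_m -> T) x : ins_fun k f x k = x.
Proof. by rewrite ffunE unlift_none. Qed.

Lemma ins_fun_inj (T : eqType) m k (f : 'I_m -> T) x :
  injective f -> (forall j, f j != x) -> injective (ins_fun k f x).
Proof.
move=> f_inj fx i1 i2.
case: (unliftP k i1) => [j1 ->|->]; case: (unliftP k i2) => [j2 ->|->];
  rewrite ?ins_fun_lift ?ins_fun_at // => eq_f.
- by rewrite (f_inj _ _ eq_f).
- by have := fx j1; rewrite eq_f eqxx.
- by have := fx j2; rewrite -eq_f eqxx.
Qed.

Section Biflags.
Variables (n : nat) (M : matroid n).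
Local Notation B := (biflat M).
Local Notation E := ('I_n.+1).
Local Notation FG b := (bF b :&: bG b).

Definition ble (b b' : B) : bool := (bF b \subset bF b') && (bG b' \subset bG b).
Definition blt (b b' : B) : bool := (b != b') && ble b b'.

Lemma ble_refl b : ble b b.
Proof. by rewrite /ble !subxx. Qed.

Lemma ble_trans a b c : ble a b -> ble b c -> ble a c.
Proof.
case/andP=> h1 h2 /andP[h3 h4].
by rewrite /ble (subset_trans h1 h3) (subset_trans h4 h2).
Qed.

Lemma ble_anti a b : ble a b -> ble b a -> a = b.
Proof.
case/andP=> h1 h2 /andP[h3 h4]; apply: val_inj.
rewrite [val a]surjective_pairing [val b]surjective_pairing.
by congr pair; apply/eqP; rewrite eqEsubset ?h1 ?h3 ?h2 ?h4.
Qed.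

Lemma biflag_chain (S : {set B}) a b :
  is_biflag S -> a \in S -> b \in S -> ble a b || ble b a.
Proof.
by case/andP=> /forall_inP chS _ aS bS; have /forall_inP := chS a aS; apply.
Qed.

Lemma biflag_sub (S S' : {set B}) : S' \subset S -> is_biflag S -> is_biflag S'.
Proof.
move=> sS'S /andP[/forall_inP chS coverS]; apply/andP; split.
  apply/forall_inP => a aS'; apply/forall_inP => b bS'.
  by have /forall_inP := chS a (subsetP sS'S a aS'); apply; exact: subsetP bS'.
apply: contra coverS => /eqP cover; rewrite eqEsubset subsetT -cover.
by apply/bigcupsP => b bS'; exact: (bigcup_sup b (subsetP sS'S b bS')).
Qed.

Definition is_max (D : {set E}) (x : E) : bool := (x \in D) && [forall y in D, (y <= x)%N].
Definition max_elt (D : {set E}) : E := odflt ord0 [pick x in D | [forall y in D, (y <= x)%N]].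

Lemma is_max_uniq D x y : is_max D x -> is_max D y -> x = y.
Proof.
case/andP=> xD /forall_inP x_max /andP[yD /forall_inP y_max].
by apply/val_inj/eqP; rewrite eqn_leq x_max // y_max.
Qed.

Lemma max_eltE D x : is_max D x -> max_elt D = x.
Proof.
move=> x_max; rewrite /max_elt; case: pickP => [z z_max|none] /=.
  exact: is_max_uniq z_max x_max.
by move: (none x) x_max; rewrite /is_max => ->.
Qed.

Lemma max_eltP D : D != set0 -> is_max D (max_elt D).
Proof.
case/set0Pn => x xD; case: (@arg_maxnP _ x (mem D) (fun y : E => (y : nat)) xD).
move=> y yD y_max; suff hy : is_max D y by rewrite (max_eltE hy).
by apply/andP; split => //; apply/forall_inP => z zD; apply: y_max.
Qed.

Definition FE m := ({ffun 'I_m -> B} * {ffun 'I_m -> E})%type.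

Definition flag m (f : {ffun 'I_m -> B}) : {set B} := [set f i | i : 'I_m].

Definition flag_cover m (f : {ffun 'I_m -> B}) : {set E} := \bigcup_(j : 'I_m) FG (f j).

Definition uncovered_above m (fe : FE m) (i : 'I_m) : {set E} :=
  ~: \bigcup_(j : 'I_m | (fe.2 i < fe.2 j)%N) FG (fe.1 j).

Definition top_uncovered m (fe : FE m) : E := max_elt (~: flag_cover fe.1).

Definition Tm_spec m (fe : FE m) : Prop :=
  [/\ injective fe.1, {homo fe.1 : i j / (i <= j)%N >-> ble i j},
      is_biflag (flag fe.1), injective fe.2 &
      forall i, fe.2 i \in FG (fe.1 i) /\ is_max (uncovered_above fe i) (fe.2 i)].

Lemma in_TmP m (fe : FE m) : reflect (Tm_spec fe) (in_Tm fe).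
Proof.
apply: (iffP and5P).
  move=> [/injectiveP f_inj /forallP f_mono fl /injectiveP e_inj /forallP e_max].
  split=> // [i j le_ij|i]; first by have /forallP/(_ j)/implyP := f_mono i; apply.
  exact/andP/e_max.
move=> [f_inj f_mono fl e_inj e_max]; split => //; try exact/injectiveP.
  by apply/forallP => i; apply/forallP => j; apply/implyP; apply: f_mono.
by apply/forallP => i; apply/andP/e_max.
Qed.

Lemma flag_coverE m (f : {ffun 'I_m -> B}) : \bigcup_(b in flag f) FG b = flag_cover f.
Proof.
apply/setP => x; apply/bigcupP/bigcupP => [[b /imsetP[i _ ->] hx]|[i _ hx]].
  by exists i.
by exists (f i) => //; apply/imsetP; exists i.
Qed.

Lemma flag_lift m (g : {ffun 'I_m.+1 -> B}) k :
  flag g = g k |: flag [ffun j => g (lift k j)].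
Proof.
apply/setP => x; apply/imsetP/setU1P => [[i _ ->]|[->|/imsetP[j _ ->]]].
- case: (unliftP k i) => [j ->|->]; last by left.
  by right; apply/imsetP; exists j => //; rewrite ffunE.
- by exists k.
- by exists (lift k j) => //; rewrite ffunE.
Qed.

Lemma top_uncoveredP m (fe : FE m) :
  is_biflag (flag fe.1) -> is_max (~: flag_cover fe.1) (top_uncovered fe).
Proof.
case/andP=> _ cover; apply: max_eltP; apply: contra cover => /eqP empty.
by rewrite flag_coverE -[flag_cover _]setCK empty setC0.
Qed.

(* e* is smaller than all labels: it is uncovered, hence a candidate for
   every maximum defining the e_j, and differs from every e_j. *)
Lemma top_uncovered_lt m (fe : FE m) j : in_Tm fe -> (top_uncovered fe < fe.2 j)%N.
Proof.
case/in_TmP=> _ _ fl _ /(_ j)[ej_in /andP[_ /forall_inP ej_max]].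
have /andP[+ _] := top_uncoveredP fl; rewrite inE => top_unc.
have sub j' : FG (fe.1 j') \subset flag_cover fe.1 by exact: (bigcup_sup j').
rewrite ltn_neqAle ej_max ?andbT.
  by apply: contraNneq top_unc => /val_inj ->; apply: subsetP (sub j) _ ej_in.
by rewrite inE; apply: contra top_unc => /bigcupP[j' _]; apply/subsetP/sub.
Qed.

Lemma top_uncovered_notin m (fe : FE m) b :
  in_Tm fe -> top_uncovered fe \in FG b -> b \notin flag fe.1.
Proof.
case/in_TmP=> _ _ fl _ _ top_b; have /andP[+ _] := top_uncoveredP fl.
rewrite inE; apply: contra => /imsetP[j _ eq_b].
by apply/bigcupP; exists j; rewrite -?eq_b.
Qed.

Definition drop_at m (k : 'I_m.+1) (g : FE m.+1) : FE m :=
  ([ffun j => g.1 (lift k j)], [ffun j => g.2 (lift k j)]).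

Definition insert_at m (k : 'I_m.+1) (fe : FE m) (b : B) (x : E) : FE m.+1 :=
  (ins_fun k fe.1 b, ins_fun k fe.2 x).

Lemma drop_insert m k (fe : FE m) b x : drop_at k (insert_at k fe b x) = fe.
Proof.
by rewrite [RHS]surjective_pairing; congr pair; apply/ffunP => j; rewrite ffunE ins_fun_lift.
Qed.

Lemma insert_drop m k (g : FE m.+1) : insert_at k (drop_at k g) (g.1 k) (g.2 k) = g.
Proof.
rewrite [RHS]surjective_pairing; congr pair; apply/ffunP => i;
  by case: (unliftP k i) => [j ->|->]; rewrite ?ins_fun_lift ?ins_fun_at ?ffunE.
Qed.

Definition min_at m (g : FE m.+1) (k : 'I_m.+1) : Prop :=
  forall j, (g.2 k < g.2 (lift k j))%N.

Lemma uncovered_above_drop m (g : FE m.+1) k j :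
  min_at g k -> uncovered_above g (lift k j) = uncovered_above (drop_at k g) j.
Proof.
move=> g_min; rewrite /uncovered_above (big_ord_lift _ k) ltnNge ltnW //= set0U.
by congr (~: _); apply: eq_big => [j'|j' _]; rewrite !ffunE.
Qed.

Lemma uncovered_above_min m (g : FE m.+1) k :
  min_at g k -> uncovered_above g k = ~: flag_cover (drop_at k g).1.
Proof.
move=> g_min; rewrite /uncovered_above (big_ord_lift _ k) ltnn /= set0U.
by congr (~: _); apply: eq_big => [j|j _]; rewrite ?ffunE ?g_min.
Qed.

Lemma in_Tm_drop m (g : FE m.+1) k : in_Tm g -> min_at g k -> in_Tm (drop_at k g).
Proof.
move=> /in_TmP[f_inj f_mono fl e_inj e_max] g_min; apply/in_TmP; split.
- by move=> j1 j2; rewrite !ffunE => /f_inj/lift_inj.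
- by move=> j1 j2 le_j; rewrite !ffunE; apply: f_mono; rewrite leq_lift2.
- by apply: biflag_sub fl; rewrite (flag_lift _ k) subsetUr.
- by move=> j1 j2; rewrite !ffunE => /e_inj/lift_inj.
- by move=> j; rewrite -uncovered_above_drop // !ffunE; apply: e_max.
Qed.

Lemma top_uncovered_drop m (g : FE m.+1) k :
  in_Tm g -> min_at g k -> top_uncovered (drop_at k g) = g.2 k.
Proof.
move=> /in_TmP[_ _ _ _ /(_ k)[_ gk_max]] g_min.
by apply: max_eltE; rewrite -uncovered_above_min.
Qed.

Lemma insert_mono m (k : 'I_m.+1) (f : {ffun 'I_m -> B}) b :
  {homo f : i j / (i <= j)%N >-> ble i j} ->
  (forall j : 'I_m, (j < k)%N -> ble (f j) b) ->
  (forall j : 'I_m, (k <= j)%N -> ble b (f j)) ->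
  {homo ins_fun k f b : i j / (i <= j)%N >-> ble i j}.
Proof.
move=> f_mono below above i1 i2.
case: (unliftP k i1) => [j1 ->|->]; case: (unliftP k i2) => [j2 ->|->];
  rewrite ?ins_fun_lift ?ins_fun_at ?ble_refl // => le_i.
- by apply: f_mono; rewrite -(leq_lift2 k).
- by apply: below; move: le_i; rewrite /= /bump; case: leqP; lia.
- by apply: above; move: le_i; rewrite /= /bump; case: leqP; lia.
Qed.

Lemma in_Tm_insert m (k : 'I_m.+1) (fe : FE m) b :
  in_Tm fe -> top_uncovered fe \in FG b -> is_biflag (b |: flag fe.1) ->
  (forall j : 'I_m, (j < k)%N -> ble (fe.1 j) b) ->
  (forall j : 'I_m, (k <= j)%N -> ble b (fe.1 j)) ->
  in_Tm (insert_at k fe b (top_uncovered fe)).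
Proof.
move=> fe_T top_b fl below above.
have top_lt := top_uncovered_lt _ fe_T.
have b_notin := top_uncovered_notin fe_T top_b.
have g_min : min_at (insert_at k fe b (top_uncovered fe)) k.
  by move=> j; rewrite /= ins_fun_at ins_fun_lift.
have /in_TmP[f_inj f_mono _ e_inj e_max] := fe_T.
apply/in_TmP; split.
- apply: ins_fun_inj => // j; apply: contraNneq b_notin => <-.
  exact: imset_f.
- exact: insert_mono.
- rewrite (flag_lift _ k) /= ins_fun_at (_ : [ffun j => _] = fe.1) //.
  by apply/ffunP => j; rewrite ffunE ins_fun_lift.
- by apply: ins_fun_inj => // j; rewrite neq_ltn top_lt orbT.
- move=> i; case: (unliftP k i) => [j ->|->].
    by rewrite uncovered_above_drop // drop_insert /= !ins_fun_lift.
  rewrite uncovered_above_min // drop_insert /= !ins_fun_at.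
  by split; last exact: top_uncoveredP (biflag_sub (subsetUr _ _) fl).
Qed.

Definition argmin_label m (g : FE m.+1) : 'I_m.+1 := [arg min_(i < ord0) (g.2 i : nat)].

Lemma argmin_label_min m (g : FE m.+1) : injective g.2 -> min_at g (argmin_label g).
Proof.
move=> e_inj j; rewrite /argmin_label; case: arg_minnP => // k _ k_min.
rewrite ltn_neqAle k_min // andbT; apply: contra_neq (neq_lift k j) => /val_inj.
exact: e_inj.
Qed.

Lemma argmin_labelE m (g : FE m.+1) k : min_at g k -> argmin_label g = k.
Proof.
move=> g_min; rewrite /argmin_label; case: arg_minnP => // i _ i_min.
case: (unliftP k i) => [j eq_i|//]; have := i_min k isT.
by rewrite eq_i leqNgt g_min.
Qed.

Definition ins_pos m (f : {ffun 'I_m -> B}) (b : B) : 'I_m.+1 :=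
  inord (\sum_(j < m) (blt (f j) b : nat)).

Lemma ins_posE m (f : {ffun 'I_m -> B}) b :
  {homo f : i j / (i <= j)%N >-> ble i j} -> (forall j, f j != b) ->
  forall j, blt (f j) b = (j < ins_pos f b)%N.
Proof.
move=> f_mono f_b j; rewrite /ins_pos inordK ?ltnS ?sum_ord_pred_le //.
apply: (downward_closed_segment (Q := fun j => blt (f j) b)) => j1 j2 le_j /andP[_ f1b].
by rewrite /blt f_b (ble_trans (f_mono _ _ le_j) f1b).
Qed.

Lemma ins_pos_drop m (g : FE m.+1) k :
  injective g.1 -> {homo g.1 : i j / (i <= j)%N >-> ble i j} ->
  ins_pos (drop_at k g).1 (g.1 k) = k.
Proof.
move=> f_inj f_mono; have neq_k j : g.1 (lift k j) != g.1 k.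
  by apply: contra_neq (neq_lift k j) => /f_inj.
have le_km : (k <= m)%N by rewrite -ltnS.
rewrite /ins_pos -[RHS]inord_val; congr inord.
rewrite -[RHS](minn_idPr le_km) -sum_ord_lt; apply: eq_bigr => j _; congr nat_of_bool.
rewrite ffunE /blt neq_k /=; case: (ltnP j k) => [lt_jk|le_kj].
  by apply: f_mono; apply: ltnW; rewrite lift_ltE.
apply/negbTE/negP => le_jk.
have le_k : (k <= lift k j)%N by rewrite leqNgt lift_ltE -leqNgt.
by have := neq_k j; rewrite (ble_anti le_jk (f_mono _ _ le_k)) eqxx.
Qed.

Definition extendable m (p : FE m * B) : bool :=
  [&& in_Tm p.1, top_uncovered p.1 \in FG p.2 & is_biflag (p.2 |: flag p.1.1)].

Definition extend m (p : FE m * B) : FE m.+1 :=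
  insert_at (ins_pos p.1.1 p.2) p.1 p.2 (top_uncovered p.1).

Definition restrict m (g : FE m.+1) : FE m * B :=
  (drop_at (argmin_label g) g, g.1 (argmin_label g)).

Lemma restrictK m (g : FE m.+1) :
  in_Tm g -> extendable (restrict g) /\ extend (restrict g) = g.
Proof.
move=> g_T; have /in_TmP[f_inj f_mono fl e_inj e_max] := g_T.
set k := argmin_label g; have g_min : min_at g k := argmin_label_min e_inj.
have top_k := top_uncovered_drop g_T g_min.
split.
  apply/and3P; split => /=; first exact: in_Tm_drop.
    by rewrite top_k; case: (e_max k).
  by rewrite -flag_lift.
by rewrite /extend /= top_k ins_pos_drop // insert_drop.
Qed.

Lemma extendK m (p : FE m * B) :
  extendable p -> in_Tm (extend p) /\ restrict (extend p) = p.
Proof.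
case: p => fe b /and3P[/= fe_T top_b fl]; have /in_TmP[_ f_mono _ _ _] := fe_T.
have f_b j : fe.1 j != b.
  apply: contraNneq (top_uncovered_notin fe_T top_b) => <-; exact: imset_f.
set k := ins_pos fe.1 b; have below := ins_posE f_mono f_b.
have above (j : 'I_m) : (k <= j)%N -> ble b (fe.1 j).
  move=> le_kj; have fj : fe.1 j \in flag fe.1 by apply/imsetP; exists j.
  have := biflag_chain fl (setU11 _ _) (setU1r b fj).
  by case/orP=> // le_jb; move: le_kj; rewrite leqNgt -below /blt f_b le_jb.
have g_T : in_Tm (extend (fe, b)).
  by apply: in_Tm_insert => // j; rewrite -below => /andP[].
have g_min : min_at (extend (fe, b)) k.
  by move=> j; rewrite /= ins_fun_at ins_fun_lift top_uncovered_lt.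
by split => //; rewrite /restrict (argmin_labelE g_min) drop_insert /= ins_fun_at.
Qed.

Definition Xmon m (fe : FE m) : Spoly M := \prod_(k < m) xv (fe.1 k).

Lemma Xmon_insert m k (fe : FE m) b x : Xmon (insert_at k fe b x) = xv b * Xmon fe.
Proof.
rewrite /Xmon (bigD1_ord k) //= ins_fun_at; congr (_ * _).
by apply: eq_bigr => j _; rewrite ins_fun_lift.
Qed.

Lemma Xmon_flag m (fe : FE m) : injective fe.1 -> Xmon fe = xset (flag fe.1).
Proof. by move=> f_inj; rewrite /xset big_imset //= => x y _ _ /f_inj. Qed.

Lemma sum_Tm_succ m :
  \sum_(g : FE m.+1 | in_Tm g) Xmon g =
  \sum_(p : FE m * B | extendable p) Xmon p.1 * xv p.2.
Proof.
rewrite (reindex_onto (@extend m) (@restrict m)) => [|g g_T]; last first.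
  by case: (restrictK g_T).
apply: eq_big => [p|p p_ext]; last by rewrite Xmon_insert mulrC.
apply/andP/idP => [[g_T /eqP <-]|p_ext]; first by case: (restrictK g_T).
by case: (extendK p_ext) => -> ->.
Qed.

Lemma sum_Tm0 : \sum_(fe : FE 0 | in_Tm fe) Xmon fe = 1.
Proof.
have no_ord0 (k : 'I_0) : False by case: k.
have flag0 (f : {ffun 'I_0 -> B}) : flag f = set0.
  by apply/setP => x; rewrite inE; apply/imsetP => -[k]; case: (no_ord0 k).
rewrite (eq_bigl predT) => [|fe]; last first.
  apply/in_TmP; split; try by move=> k; case: (no_ord0 k).
  rewrite flag0; apply/andP; split; first by apply/forall_inP => b; rewrite inE.
  by rewrite big_set0 eq_sym; apply/set0Pn; exists ord0; rewrite inE.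
rewrite (eq_bigr (fun _ => 1)) => [|fe _]; last by rewrite /Xmon big_ord0.
by rewrite sumr_const card_prod !card_ffun !card_ord !expn0.
Qed.

Local Notation ideal_IJ := (in_ideal (@IJ_gen n M)).

(* delta_i = gamma_i + gammabar_i - sum_{F, G proper} x_{F|G}, checked on each
   biflat by the truth table of four booleans. *)
Lemma delta_termE (x : Spoly M) (a b c d : bool) :
  a || b -> c ==> a -> d ==> b -> ~~ (c && d) ->
  (if a && b then x else 0) =
  (if a && ~~ c then x else 0) + (if b && ~~ d then x else 0)
  - (if ~~ c && ~~ d then x else 0).
Proof.
by case: a; case: b; case: c; case: d => //= *;
  rewrite ?addr0 ?add0r ?subr0 ?subrr ?addrK ?oppr0.
Qed.

Lemma deltaE (i : E) : delta M i =
  gamma M i + gammabar M i - \sum_(b | (bF b != setT) && (bG b != setT)) xv b.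
Proof.
rewrite /delta /gamma /gammabar [LHS]big_mkcond !(big_mkcond _ (fun b => xv b)).
rewrite -big_split -sumrB; apply: eq_bigr => b _; rewrite in_setI.
have /and5P[_ _ _ _ /andP[not_EE /eqP cover]] := valP b.
apply: delta_termE => //; try by apply/implyP => /eqP ->; rewrite inE.
by move/setP/(_ i): cover; rewrite in_setU inE.
Qed.

Lemma delta_diff (i j : E) : ideal_IJ (delta M i - delta M j).
Proof.
have -> : delta M i - delta M j =
    (gamma M i - gamma M j) + (gammabar M i - gammabar M j).
  by rewrite !deltaE; ring.
by apply: idealD; apply: ideal_gen; right; [left|right]; exists i, j.
Qed.

Lemma delta_step m :
  ideal_IJ (\sum_(fe : FE m | in_Tm fe) Xmon fe * delta M (top_uncovered fe)
            - \sum_(g : FE m.+1 | in_Tm g) Xmon g).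
Proof.
under eq_bigr => fe _ do rewrite /delta mulr_sumr
  (bigID (fun b => is_biflag (b |: flag fe.1))) /=.
rewrite big_split /= pair_big_dep /= sum_Tm_succ.
rewrite addrAC subrr add0r; apply: ideal_sum => fe fe_T.
apply: ideal_sum => b /andP[top_b not_fl].
apply: ideal_gen; left; exists (b |: flag fe.1); split => //.
have /in_TmP[f_inj _ _ _ _] := fe_T.
by rewrite Xmon_flag // /xset big_setU1 ?(top_uncovered_notin fe_T top_b) //= mulrC.
Qed.

End Biflags.

Theorem mainTheorem7 (n : nat) (M : matroid n)
  (hloops : no_loops M) (hcoloops : no_coloops M) (m : nat) (i : 'I_n.+1) :
  eq_in_A (delta M i ^+ m)
    (\sum_(fe : {ffun 'I_m -> biflat M} * {ffun 'I_m -> 'I_n.+1} | in_Tm fe)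
        \prod_(k < m) xv (fe.1 k)).
Proof.
rewrite /eq_in_A; change (in_ideal (@IJ_gen n M)
  (delta M i ^+ m - \sum_(fe : FE M m | in_Tm fe) Xmon fe)).
elim: m => [|m IH]; first by rewrite sum_Tm0 expr0 subrr; exact: ideal0.
set T := \sum_(fe : FE M m | in_Tm fe) Xmon fe.
set T' := \sum_(fe : FE M m.+1 | in_Tm fe) Xmon fe.
set S := \sum_(fe : FE M m | in_Tm fe) Xmon fe * delta M (top_uncovered fe).
(* Modulo I + J: delta^(m+1) = T delta_i = S = T', where S is the sum of
   the x_f delta_{e*(f)}. *)
have T_S : in_ideal (@IJ_gen n M) (T * delta M i - S).
  rewrite mulr_suml -sumrB; apply: ideal_sum => fe _.
  by rewrite -mulrBr; apply: idealMl; exact: delta_diff.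
have -> : delta M i ^+ m.+1 - T' =
    (delta M i ^+ m - T) * delta M i + ((T * delta M i - S) + (S - T')).
  by rewrite exprSr; ring.
by apply: idealD; [exact: idealMr | apply: idealD => //; exact: delta_step].
Qed.
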